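(* Let $V$ be a finite set and $d$ a metric on $V$ (nonnegative, symmetric, satisfying the triangle inequality). For a rooted binary tree $T$ whose leaves are in bijection with $V$, let $R_T(V)=\sum_{\{i,j\}\subseteq V}d(i,j)\,|\mathrm{leaves}(T[i\vee j])|$. Then for every such tree $T$, $R_T(V)\ge\frac12\max_{T'}R_{T'}(V)$, the maximum being over all such trees $T'$.
   Context: $T[i\vee j]$ denotes the subtree of $T$ rooted at the least common ancestor of the leaves $i$ and $j$, and $|\mathrm{leaves}(T[i\vee j])|$ is its number of leaves. The sum is over unordered pairs of distinct elements. *)

From HB Require Import structures.
From mathcomp Require Import all_boot all_order all_algebra.
Set Implicit Arguments. Unset Strict Implicit. Unset Printing Implicit Defensive.
Import Order.TTheory GRing.Theory Num.Theory.

Inductive btree (T : Type) : Type :=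
  | Leaf of T
  | Node of btree T & btree T.
Arguments Leaf {T} _.
Arguments Node {T} _ _.

Fixpoint leaves {T : Type} (t : btree T) : seq T :=
  match t with
  | Leaf x => [:: x]
  | Node l r => leaves l ++ leaves r
  end.

(* The leaves of t are in bijection with V: each element of V labels
   exactly one leaf. *)
Definition tree_on (V : finType) (t : btree V) : Prop :=
  perm_eq (leaves t) (enum V).

(* |leaves(T[i \/ j])| : number of leaves of the subtree rooted at the
   least common ancestor of the leaves i and j. *)
Fixpoint lca_size {V : eqType} (t : btree V) (i j : V) : nat :=
  match t with
  | Leaf _ => 1
  | Node l r =>
      if (i \in leaves l) && (j \in leaves l) then lca_size l i j
      else if (i \in leaves r) && (j \in leaves r) then lca_size r i j
      else size (leaves t)
  end.

(* R_T(V) = sum over unordered pairs {i,j} of distinct elements of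
   d(i,j) * |leaves(T[i \/ j])|; unordered pairs are enumerated as
   ordered pairs (i,j) with enum_rank i < enum_rank j. *)
Definition revenue (R : ringType) (V : finType) (d : V -> V -> R)
    (t : btree V) : R :=
  \sum_(i : V) \sum_(j : V | (enum_rank i < enum_rank j)%N)
     d i j * (lca_size t i j)%:R.

From mathcomp Require Import all_boot all_order all_algebra.
From mathcomp Require Import lra.
Set Implicit Arguments. Unset Strict Implicit. Unset Printing Implicit Defensive.
Import Order.TTheory GRing.Theory Num.Theory.
Local Open Scope ring_scope.

(* Let n = |V|, let D = sum of d(i,j) over ordered pairs of
   distinct elements of V, and for a tree t let W(t) be the sum over the same
   ordered pairs of d(i,j) * |leaves(t[i \/ j])|; by symmetry W(t) = 2 R_t(V).
   - Upper bound: every lca-subtree has at most n leaves, so W(t) <= n D.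
   - Lower bound: n D <= 2 W(t), by induction on t.  At a node with subtrees
     l, r of a and b leaves, W(t) = W(l) + W(r) + 2 (a + b) X where X is the
     cross sum of d(i,j) over i in l, j in r; averaging the triangle
     inequality d(i,i') <= d(i,j) + d(j,i') over j in r gives b D(l) <= 2 a X,
     and symmetrically a D(r) <= 2 b X, which with the induction hypotheses
     a D(l) <= 2 W(l), b D(r) <= 2 W(r) closes the induction.
   Hence 2 R_T'(V) = W(T') <= n D <= 2 W(T) = 4 R_T(V). *)

Section PairSums.
Variables (R : nmodType) (V : eqType).
Implicit Types (s L M : seq V) (f g : V -> V -> R).

Definition pair_sum (s : seq V) f := \sum_(i <- s) \sum_(j <- s | i != j) f i j.

Definition cross_sum (L M : seq V) f := \sum_(i <- L) \sum_(j <- M) f i j.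

Lemma pair_sum_eq_in s f g : {in s &, f =2 g} -> pair_sum s f = pair_sum s g.
Proof.
move=> fg; apply: eq_big_seq => i si; rewrite big_seq_cond [RHS]big_seq_cond.
by apply: eq_bigr => j /andP[sj _]; apply: fg.
Qed.

Lemma cross_sum_eq_in L M f g :
  {in L & M, f =2 g} -> cross_sum L M f = cross_sum L M g.
Proof.
by move=> fg; apply: eq_big_seq => i Li; apply: eq_big_seq => j Mj; apply: fg.
Qed.

Lemma pair_sum_perm s1 s2 f : perm_eq s1 s2 -> pair_sum s1 f = pair_sum s2 f.
Proof.
by move=> e; rewrite /pair_sum (perm_big _ e); apply: eq_bigr => i _; apply: perm_big.
Qed.

Lemma cross_sumC L M f : cross_sum L M f = cross_sum M L (fun i j => f j i).
Proof. exact: exchange_big. Qed.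

Lemma pair_sum_cat L M f : ~~ has (mem L) M ->
  pair_sum (L ++ M) f =
  (pair_sum L f + cross_sum L M f) + (cross_sum M L f + pair_sum M f).
Proof.
move=> /hasPn disj.
have drop_neq A B : (forall i j, i \in A -> j \in B -> i != j) ->
    \sum_(i <- A) \sum_(j <- B | i != j) f i j = cross_sum A B f.
  move=> AB; apply: eq_big_seq => i Ai; rewrite big_seq_cond [RHS]big_seq.
  by apply: eq_bigl => j; apply: andb_idr; apply: AB.
rewrite /pair_sum big_cat /=; under eq_bigr do rewrite big_cat.
under [X in _ + X]eq_bigr do rewrite big_cat.
have LM i j : i \in L -> j \in M -> i != j.
  by move=> Li Mj; apply: contraNneq (disj j Mj) => <-.
rewrite !big_split /= (drop_neq L M) // (drop_neq M L) // => i j Mi Lj.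
by rewrite eq_sym LM.
Qed.

End PairSums.

Section ScaledPairSums.
Variables (R : pzSemiRingType) (V : eqType).
Implicit Types (s L M : seq V) (f : V -> V -> R).

Lemma pair_sum_mulr s f c :
  c * pair_sum s f = pair_sum s (fun i j => c * f i j).
Proof. by rewrite mulr_sumr; apply: eq_bigr => i _; rewrite mulr_sumr. Qed.

Lemma cross_sum_mulr L M f c :
  cross_sum L M f * c = cross_sum L M (fun i j => f i j * c).
Proof. by rewrite mulr_suml; apply: eq_bigr => i _; rewrite mulr_suml. Qed.

Lemma sum_const_seq s (c : R) : \sum_(j <- s) c = (size s)%:R * c.
Proof. by rewrite big_const_seq count_predT iter_addr_0 mulr_natl. Qed.

End ScaledPairSums.

Lemma pair_sum_enum (R : nmodType) (V : finType) (g : V -> V -> R) :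
  (forall i j, g i j = g j i) ->
  pair_sum (enum V) g =
  (\sum_(i : V) \sum_(j : V | (enum_rank i < enum_rank j)%N) g i j) *+ 2.
Proof.
move=> gsym; rewrite /pair_sum big_enum /=.
under eq_bigr => i _ do rewrite big_enum_cond
  (bigID (fun j => (enum_rank i < enum_rank j)%N)) /=.
have rank_lt (i j : V) : (i != j) && (enum_rank i < enum_rank j)%N =
                  (enum_rank i < enum_rank j)%N.
  by rewrite -(inj_eq enum_rank_inj) -val_eqE /=; case: ltngtP.
have rank_gt (i j : V) : (i != j) && ~~ (enum_rank i < enum_rank j)%N =
                  (enum_rank j < enum_rank i)%N.
  by rewrite -(inj_eq enum_rank_inj) -val_eqE /=; case: ltngtP.
rewrite big_split mulr2n /=; congr (_ + _).
  by apply: eq_bigr => i _; apply: eq_bigl => j; apply: rank_lt.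
under eq_bigr => i _ do rewrite (eq_bigl _ _ (rank_gt i)) big_mkcond.
rewrite exchange_big /=; apply: eq_bigr => i _; rewrite [RHS]big_mkcond.
by apply: eq_bigr => j _; rewrite gsym.
Qed.

Section LcaSums.
Variables (R : pzSemiRingType) (V : eqType).
Implicit Types (t l r : btree V) (f : V -> V -> R).

Lemma lca_sizeC t i j : lca_size t i j = lca_size t j i.
Proof.
elim: t => //= l IHl r IHr.
by rewrite [(j \in leaves l) && _]andbC [(j \in leaves r) && _]andbC IHl IHr.
Qed.

Lemma lca_size_le t i j : (lca_size t i j <= size (leaves t))%N.
Proof.
elim: t => //= l IHl r IHr; rewrite size_cat.
case: ifP => _; first exact: leq_trans IHl (leq_addr _ _).
by case: ifP => _ //; apply: leq_trans IHr (leq_addl _ _).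
Qed.

Definition lca_sum t f :=
  pair_sum (leaves t) (fun i j => f i j * (lca_size t i j)%:R).

(* At a node, pairs inside one subtree keep their lca, while every pair
   separated by the root has the whole tree as lca subtree. *)
Lemma lca_sum_Node l r f : ~~ has (mem (leaves l)) (leaves r) ->
  let n := (size (leaves (Node l r)))%:R in
  lca_sum (Node l r) f =
  (lca_sum l f + cross_sum (leaves l) (leaves r) f * n) +
  (cross_sum (leaves r) (leaves l) f * n + lca_sum r f).
Proof.
move=> disj; have /hasPn disjr := disj.
have notin_l i : i \in leaves r -> (i \in leaves l) = false.
  by move=> ri; apply: negbTE; apply: disjr.
have notin_r i : i \in leaves l -> (i \in leaves r) = false.
  by move=> li; apply/negP => /notin_l; rewrite li.
rewrite /lca_sum /= pair_sum_cat // !cross_sum_mulr.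
congr (_ + _ + (_ + _)).
- by apply: pair_sum_eq_in => i j /= li lj; rewrite li lj.
- apply: cross_sum_eq_in => i j /= li rj.
  by rewrite li (notin_l j rj) (notin_r i li).
- apply: cross_sum_eq_in => i j /= ri lj.
  by rewrite (notin_l i ri) lj (notin_r j lj) andbF.
- apply: pair_sum_eq_in => i j /= ri rj.
  by rewrite (notin_l i ri) ri rj.
Qed.

End LcaSums.

Section Bounds.
Variables (R : realDomainType) (V : eqType).
Implicit Types (s L M : seq V) (f g : V -> V -> R).

Lemma pair_sum_ler s f g : (forall i j, f i j <= g i j) ->
  pair_sum s f <= pair_sum s g.
Proof. by move=> fg; apply: ler_sum => i _; apply: ler_sum => j _. Qed.

Lemma pair_sum_le_cross_sum s f : (forall i j, 0 <= f i j) ->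
  pair_sum s f <= cross_sum s s f.
Proof.
move=> f_ge0; apply: ler_sum => i _.
by rewrite [leRHS](bigID (fun j => i != j)) /= lerDl sumr_ge0.
Qed.

Lemma lca_sum_le t f : (forall i j, 0 <= f i j) ->
  lca_sum t f <= (size (leaves t))%:R * pair_sum (leaves t) f.
Proof.
move=> f_ge0; rewrite pair_sum_mulr; apply: pair_sum_ler => i j.
by rewrite [leRHS]mulrC ler_wpM2l // ler_nat lca_size_le.
Qed.

Variable d : V -> V -> R.
Hypothesis d_ge0 : forall x y, 0 <= d x y.
Hypothesis d_sym : forall x y, d x y = d y x.
Hypothesis d_tri : forall x y z, d x z <= d x y + d y z.

(* |M| D(L) <= 2 |L| X(L, M): average the triangle inequality
   d i i' <= d i j + d j i' over j in M, then sum over pairs in L. *)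
Lemma cross_sum_bound L M :
  (size M)%:R * pair_sum L d <= 2 * (size L)%:R * cross_sum L M d.
Proof.
pose row i := \sum_(j <- M) d i j.
have row_ge0 i : 0 <= row i by apply: sumr_ge0.
have via_M i i' : (size M)%:R * d i i' <= row i + row i'.
  rewrite -big_split -sum_const_seq /=.
  by apply: ler_sum => j _; rewrite [d i' j]d_sym.
rewrite pair_sum_mulr (le_trans (pair_sum_ler _ via_M)) //.
have pair_row_ge0 i i' : 0 <= row i + row i' by rewrite addr_ge0.
rewrite (le_trans (pair_sum_le_cross_sum L pair_row_ge0)) //.
rewrite /cross_sum; under eq_bigr do rewrite big_split sum_const_seq /=.
by rewrite big_split /= -mulr_sumr sum_const_seq -mulr2n -[_ *+ 2]mulr_natl mulrA.
Qed.

Lemma lca_sum_lower t : uniq (leaves t) ->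
  (size (leaves t))%:R * pair_sum (leaves t) d <= 2 * lca_sum t d.
Proof.
elim: t => [x _|l lower_l r lower_r].
  by rewrite /lca_sum /pair_sum /= !big_seq1 !big_cons !big_nil eqxx /= !mulr0.
rewrite [leaves _]/= cat_uniq => /and3P[{}/lower_l lower_l disj {}/lower_r lower_r].
have Xsym : cross_sum (leaves r) (leaves l) d = cross_sum (leaves l) (leaves r) d.
  by rewrite cross_sumC; apply: cross_sum_eq_in => i j _ _; apply: d_sym.
have boundl := cross_sum_bound (leaves l) (leaves r).
have boundr := cross_sum_bound (leaves r) (leaves l).
rewrite Xsym in boundr.
rewrite lca_sum_Node // [leaves _]/= pair_sum_cat // Xsym size_cat natrD.
lra.
Qed.

End Bounds.

Lemma revenue_lca_sum (R : nzRingType) (V : finType) (d : V -> V -> R)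
    (d_sym : forall x y, d x y = d y x) (t : btree V) :
  tree_on t -> 2 * revenue d t = lca_sum t d.
Proof.
move=> Ht; rewrite /lca_sum (pair_sum_perm _ Ht) pair_sum_enum ?mulr_natl //.
by move=> i j; rewrite d_sym lca_sizeC.
Qed.

Theorem mainTheorem13 (R : realFieldType) (V : finType) (d : V -> V -> R)
  (d_nonneg : forall x y, 0 <= d x y)
  (d_sym : forall x y, d x y = d y x)
  (d_tri : forall x y z, d x z <= d x y + d y z)
  (T : btree V) (HT : tree_on T) :
  forall T' : btree V, tree_on T' ->
    (1 / 2) * revenue d T' <= revenue d T.
Proof.
move=> T' HT'.
have uniqT : uniq (leaves T) by rewrite (perm_uniq HT) enum_uniq.
have lower := lca_sum_lower d_nonneg d_sym d_tri uniqT.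
have upper := lca_sum_le T' d_nonneg.
rewrite -(revenue_lca_sum d_sym HT) (pair_sum_perm _ HT) (perm_size HT) in lower.
rewrite -(revenue_lca_sum d_sym HT') (pair_sum_perm _ HT') (perm_size HT') in upper.
lra.
Qed.
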